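(* Let $k$ be a positive integer, and let $T$ be a tree with $ex(T)=1$ such that $\ell_1, \ell_2, \ldots, \ell_{\alpha}$ are the terminal vertices of the exterior major vertex $v$ of $T$. Then $\dim_{k,f}(T)=\dim_f(T)$ if and only if $d(v, \ell_i) \le k$ for each $i\in\{1,2,\ldots,\alpha\}$.
   Context: $d(x,y)$ is the distance in the tree. For a function $g$ on $V(T)$ and $U\subseteq V(T)$, $g(U)=\sum_{s\in U}g(s)$. $R\{x,y\}=\{z: d(x,z)\ne d(y,z)\}$; $g:V(T)\to[0,1]$ is a resolving function if $g(R\{x,y\})\ge1$ for all distinct $x,y$; $\dim_f(T)$ is the minimum of $g(V(T))$ over resolving functions. For a positive integer $k$, $d_k(x,y)=\min\{d(x,y),k+1\}$, $R_k\{x,y\}=\{z: d_k(x,z)\neq d_k(y,z)\}$; $h:V(T)\to[0,1]$ is a $k$-truncated resolving function if $h(R_k\{x,y\})\ge 1$ for all distinct $x,y$, and $\dim_{k,f}(T)$ is the minimum of $h(V(T))$ over such $h$. A leaf has degree one; a major vertex has degree at least three. A leaf $\ell$ is a terminal vertex of a major vertex $v$ if $d(\ell,v)<d(\ell,w)$ for every other major vertex $w$; an exterior major vertex is a major vertex with at least one terminal vertex; $ex(T)$ is the number of exterior major vertices. *)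

From HB Require Import structures.
From mathcomp Require Import all_boot all_order all_algebra.
From mathcomp Require Import classical_sets reals.
Set Implicit Arguments. Unset Strict Implicit. Unset Printing Implicit Defensive.
Import Order.TTheory GRing.Theory Num.Theory.

Section Graphs.
Variables (T : finType) (e : rel T).

Definition simple_graph : Prop := symmetric e /\ irreflexive e.
Definition connected_graph : Prop := forall x y : T, connect e x y.
Definition acyclic_graph : Prop :=
  forall (x : T) (p : seq T),
    path e x p -> uniq (x :: p) -> 2 <= size p -> ~~ e (last x p) x.
Definition is_tree : Prop := [/\ simple_graph, connected_graph & acyclic_graph].

Definition walk_n (n : nat) (x y : T) : bool :=
  [exists p : n.-tuple T, path e x p && (last x p == y)].

(* graph distance: the least n < #|T| with a walk of length n from x to y
   (for connected graphs this is the usual shortest-path distance). *)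
Definition dist (x y : T) : nat := find (fun n => walk_n n x y) (iota 0 #|T|).

Definition distk (k : nat) (x y : T) : nat := minn (dist x y) k.+1.

Definition deg (x : T) : nat := #|[set y | e x y]|.
Definition is_leaf (x : T) : bool := deg x == 1.
Definition is_major (x : T) : bool := 3 <= deg x.

Definition is_terminal (l v : T) : bool :=
  [&& is_leaf l, is_major v &
      [forall w, (is_major w && (w != v)) ==> (dist l v < dist l w)]].

Definition is_exterior_major (v : T) : bool :=
  is_major v && [exists l, is_terminal l v].

Definition ex_num : nat := #|[set v | is_exterior_major v]|.

Variable R : realType.
Local Open Scope ring_scope.

Definition Rset (x y : T) : {set T} := [set z | dist x z != dist y z].
Definition Rkset (k : nat) (x y : T) : {set T} := [set z | distk k x z != distk k y z].

Definition resolving_fun (g : T -> R) : Prop :=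
  (forall s, 0 <= g s <= 1) /\
  (forall x y : T, x != y -> 1 <= \sum_(s in Rset x y) g s).

Definition k_resolving_fun (k : nat) (h : T -> R) : Prop :=
  (forall s, 0 <= h s <= 1) /\
  (forall x y : T, x != y -> 1 <= \sum_(s in Rkset k x y) h s).

(* dim_f and dim_{k,f}: minimum (= infimum; it is attained) of g(V(T)). *)
Definition dimf : R :=
  inf [set r | exists g : T -> R, resolving_fun g /\ r = \sum_(s : T) g s].
Definition dimkf (k : nat) : R :=
  inf [set r | exists h : T -> R, k_resolving_fun k h /\ r = \sum_(s : T) h s].

End Graphs.

From mathcomp Require Import all_boot all_order all_algebra.
From mathcomp Require Import zify lra.
From mathcomp Require Import classical_sets reals.
Set Implicit Arguments. Unset Strict Implicit. Unset Printing Implicit Defensive.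
Import Order.TTheory GRing.Theory Num.Theory.

(* Since v is the only exterior major vertex, it is the only major vertex: a
   major vertex w <> v farthest from v would have a terminal leaf beyond it.
   So T is a spider, paths (branches) glued at v.  Two neighbours u, u' of v are
   resolved only by the vertices of their own branches; summing over the pairs of
   branches gives g(V) >= deg(v)/2 for every resolving function g, and weight 1/2
   on each neighbour of v attains this, so dim_f(T) = deg(v)/2.  That weight is
   k-truncated resolving when every vertex is within distance k of v, i.e. when
   no branch is longer than k.  If some branch is longer, its vertices at depths
   k and k+1 are k-resolved only by v and that branch, which forces
   g(V) >= (deg(v)+1)/2. *)

Section NonnegSums.
Variables (R : realFieldType) (I : finType).
Local Open Scope ring_scope.

Lemma ler_sum_sub (P Q : pred I) (F : I -> R) : (forall i, 0 <= F i) ->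
  (forall i, P i -> Q i) -> \sum_(i | P i) F i <= \sum_(i | Q i) F i.
Proof.
move=> F_ge0 PQ; rewrite [X in X <= _]big_mkcond [X in _ <= X]big_mkcond.
by apply: ler_sum => i _; case: ifP => [/PQ -> // | _]; case: ifP.
Qed.

Lemma ler_sum_orb (P Q : pred I) (F : I -> R) : (forall i, 0 <= F i) ->
  \sum_(i | P i || Q i) F i <= \sum_(i | P i) F i + \sum_(i | Q i) F i.
Proof.
move=> F_ge0; rewrite !(big_mkcond (fun i => _ || _)) [X in _ <= X + _]big_mkcond.
rewrite [X in _ <= _ + X]big_mkcond -big_split /=; apply: ler_sum => i _.
by case: (P i); case: (Q i); rewrite /= ?addr0 ?add0r ?lerDl ?F_ge0.
Qed.

(* Double counting over the ordered pairs of distinct elements of [S]. *)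
Lemma sum_ge_half_card (a : I -> R) (S : {set I}) :
  (forall u u', u \in S -> u' \in S -> u != u' -> 1 <= a u + a u') ->
  (2 <= #|S|)%N -> #|S|%:R / 2 <= \sum_(u in S) a u.
Proof.
move=> a_pair S_ge2.
have row u : u \in S -> 2 * a u + (#|S|%:R - 1) <= \sum_(u' in S) (a u + a u').
  move=> uS; rewrite (bigD1 u) //= mulr_natl mulr2n lerD2l.
  rewrite (cardsD1 u S) uS add1n -natr1 addrK.
  have -> : #|S :\ u|%:R = \sum_(u' in S :\ u) (1 : R) by rewrite sumr_const.
  rewrite [X in _ <= X](eq_bigl (fun u' => u' \in S :\ u)); last first.
    by move=> u'; rewrite in_setD1 andbC.
  by apply: ler_sum => u'; rewrite in_setD1 => /andP[u'u u'S]; rewrite a_pair // eq_sym.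
have : \sum_(u in S) (2 * a u + (#|S|%:R - 1)) <=
       \sum_(u in S) \sum_(u' in S) (a u + a u') by exact: ler_sum.
rewrite big_split /= -mulr_sumr sumr_const.
under eq_bigr do rewrite big_split /= sumr_const.
rewrite big_split /= sumr_const sumrMnl.
move: (\sum_(u in S) a u) => A; rewrite -(mulr_natr A) -(mulr_natr (#|S|%:R - 1)).
have : (2 : R) <= #|S|%:R by rewrite ler_nat.
move: (#|S|%:R : R) => N; nra.
Qed.

End NonnegSums.

Lemma inf_eq_least (R : realType) (S : set R) c :
  S c -> (forall x, S x -> c <= x)%R -> inf S = c.
Proof.
move=> Sc c_lb; apply/le_anti/andP; split.
  by apply: ge_inf => //; exists c => x /c_lb.
by apply: lb_le_inf; [exists c | move=> x /c_lb].
Qed.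

Section Walks.
Variables (T : finType) (e : rel T).
Local Notation d := (dist e).

Lemma walk_nP n x y :
  reflect (exists p : seq T, [/\ size p = n, path e x p & last x p = y])
          (walk_n e n x y).
Proof.
apply: (iffP existsP) => [[p /andP[p_path /eqP p_last]] | [p [p_size p_path p_last]]].
  by exists (val p); rewrite size_tuple.
have p_sizeb : size p == n by rewrite p_size.
by exists (Tuple p_sizeb); rewrite /= p_path p_last eqxx.
Qed.

Lemma dist_le_walk n x y : walk_n e n x y -> d x y <= n.
Proof.
move=> xy_walk; rewrite leqNgt; apply/negP => n_lt.
have n_lt_card : n < #|T|.
  by rewrite -[#|T|](size_iota 0); apply: leq_trans n_lt (find_size _ _).
by have := before_find 0 n_lt; rewrite nth_iota // add0n xy_walk.
Qed.

Lemma dist_eq0 x y : (d x y == 0) = (x == y).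
Proof.
apply/idP/eqP => [/eqP dxy0 | <-]; last first.
  by rewrite -leqn0; apply: dist_le_walk; apply/walk_nP; exists [::].
have card_gt0 : 0 < #|T| by apply/card_gt0P; exists x.
have has_walk : has (fun n => walk_n e n x y) (iota 0 #|T|).
  by rewrite has_find size_iota; move: dxy0; rewrite /dist => ->.
have := nth_find 0 has_walk; move: dxy0; rewrite /dist => -> /=.
by rewrite nth_iota // => /walk_nP[p [/size0nil -> _ <-]].
Qed.

Lemma distxx x : d x x = 0.
Proof. by apply/eqP; rewrite dist_eq0. Qed.

Lemma dist_gt0 x y : (0 < d x y) = (x != y).
Proof. by rewrite lt0n dist_eq0. Qed.

Lemma Rkset_sub_Rset k x y z : z \in Rkset e k x y -> z \in Rset e x y.
Proof. by rewrite !inE /distk; apply: contraNN => /eqP ->. Qed.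

Lemma Rkset_Rset k x y z :
  d x z <= k.+1 -> d y z <= k.+1 -> (z \in Rkset e k x y) = (z \in Rset e x y).
Proof. by move=> xz yz; rewrite !inE /distk (minn_idPl xz) (minn_idPl yz). Qed.

Lemma RsetC x y : Rset e x y = Rset e y x.
Proof. by apply/setP => z; rewrite !inE eq_sym. Qed.

Variable R : realType.
Local Open Scope ring_scope.

Lemma k_resolving_resolving k (h : T -> R) :
  k_resolving_fun e k h -> resolving_fun e h.
Proof.
move=> [h01 h_res]; split=> // x y xy; apply: le_trans (h_res x y xy) _.
apply: ler_sum_sub => [z | z]; [by case/andP: (h01 z) | exact: Rkset_sub_Rset].
Qed.

Lemma const1_k_resolving k : k_resolving_fun e k (fun=> 1 : R).
Proof.
split=> [_ | x y xy]; first by rewrite ler01 lexx.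
have x_in : x \in Rkset e k x y.
  by rewrite inE /distk distxx min0n eq_sym -lt0n leq_min dist_gt0 eq_sym xy.
by rewrite (bigD1 x) //= lerDl sumr_ge0.
Qed.

End Walks.

Section Trees.
Variables (T : finType) (e : rel T).
Hypotheses (e_sym : symmetric e) (e_irr : irreflexive e).
Hypotheses (e_conn : connected_graph e) (e_acyc : acyclic_graph e).
Local Notation d := (dist e).

Lemma exists_shortest_path x y : exists p : seq T,
  [/\ path e x p, last x p = y, uniq (x :: p) & size p = d x y].
Proof.
have shorten_walk n : walk_n e n x y -> exists2 p : seq T,
    [/\ path e x p, last x p = y & uniq (x :: p)] & size p <= n.
  case/walk_nP=> p [<- p_path p_last].
  case: (shortenP p_path) p_last => q q_path q_uniq q_sub q_last.
  by exists q => //; apply: uniq_leq_size q_sub; case/andP: q_uniq.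
have /connectP[p0 p0_path p0_last] := e_conn x y.
have [|p [p_path p_last p_uniq] _] := @shorten_walk (size p0).
  by apply/walk_nP; exists p0.
have d_walk : walk_n e (d x y) x y.
  have p_lt : size p < #|T|.
    by have := max_card (mem (x :: p)); rewrite (card_uniqP p_uniq).
  have has_walk : has (fun n => walk_n e n x y) (iota 0 #|T|).
    by apply/hasP; exists (size p); rewrite ?mem_iota //; apply/walk_nP; exists p.
  have d_lt : d x y < #|T| by move: has_walk; rewrite has_find size_iota.
  by have := nth_find 0 has_walk; rewrite nth_iota.
have [q [q_path q_last q_uniq] q_size] := shorten_walk _ d_walk.
exists q; split => //; apply/eqP; rewrite eqn_leq q_size.
by apply: dist_le_walk; apply/walk_nP; exists q.
Qed.

Lemma path_converse x p : path (fun y z => e z y) x p = path e x p.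
Proof. by apply: eq_path => y z; rewrite e_sym. Qed.

(* [s], then [A] up to [c], then back along [B], is a cycle. *)
Lemma acyclic_two_arcs s c A B :
  path e s (rcons A c) -> path e s (rcons B c) -> uniq (s :: rcons A c ++ rev B) ->
  (A != [::]) || (B != [::]) -> False.
Proof.
move=> A_path B_path cyc_uniq AB_ne.
have : path e c (rcons (rev B) s).
  move: B_path; rewrite -path_converse -rev_path last_rcons belast_rcons.
  by rewrite rev_cons.
rewrite rcons_path => /andP[B'_path Bs].
have cyc_path : path e s (rcons A c ++ rev B) by rewrite cat_path A_path last_rcons.
have cyc_size : 2 <= size (rcons A c ++ rev B).
  rewrite size_cat size_rcons size_rev; move: AB_ne; rewrite -!size_eq0.
  by case: (size A) => [|a]; case: (size B) => [|b] //; rewrite addnS.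
by have := e_acyc cyc_path cyc_uniq cyc_size; rewrite last_cat last_rcons Bs.
Qed.

Lemma uniq_paths_head_eq s p q :
  path e s p -> path e s q -> uniq (s :: p) -> uniq (s :: q) ->
  p != [::] -> q != [::] -> last s p = last s q -> head s p = head s q.
Proof.
move=> p_path q_path p_uniq q_uniq p_ne q_ne pq_last.
case: (eqVneq (head s p) (head s q)) => // pq_head; exfalso.
have meet : has (mem q) p.
  have last_in r : r != [::] -> last s r \in r.
    by case: r => // x r _; exact: (mem_last x r).
  apply/hasP; exists (last s p); first exact: last_in.
  by change (last s p \in q); rewrite pq_last last_in.
case/split_find: meet p_path p_uniq pq_head => c A1 A2 cq A1q p_path p_uniq pq_head.
case/splitPr: cq q_path q_uniq pq_head A1q => B1 B2 q_path q_uniq pq_head A1q.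
have A1_path : path e s (rcons A1 c) by move: p_path; rewrite cat_path => /andP[].
have B1_path : path e s (rcons B1 c).
  by move: q_path; rewrite -cat_rcons cat_path => /andP[].
have arcs_ne : (A1 != [::]) || (B1 != [::]).
  clear -pq_head; move: pq_head.
  by case: A1 => [|? ?]; case: B1 => [|? ?] //=; rewrite eqxx.
apply: (acyclic_two_arcs A1_path B1_path _ arcs_ne).
have [sA A_uniq] : s \notin rcons A1 c /\ uniq (rcons A1 c).
  move: p_uniq; rewrite /= mem_cat cat_uniq negb_or.
  by case/andP=> /andP[-> _] /and3P[-> _ _].
have [sB B_uniq cB] : [/\ s \notin B1, uniq B1 & c \notin B1].
  move: q_uniq; rewrite /= mem_cat cat_uniq negb_or /=.
  by case/andP=> /andP[-> _] /and3P[-> /norP[cB _] _].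
rewrite /= mem_cat mem_rev negb_or sA sB cat_uniq rev_uniq A_uniq B_uniq /= andbT.
apply/hasP=> -[x]; rewrite mem_rev => xB.
rewrite mem_rcons inE => /orP[/eqP xc | xA]; first by rewrite -xc xB in cB.
by case/hasP: A1q; exists x; rewrite // inE mem_cat xB.
Qed.

Lemma uniq_path_unique s p q : path e s p -> path e s q ->
  uniq (s :: p) -> uniq (s :: q) -> last s p = last s q -> p = q.
Proof.
elim: p s q => [|a p IH] s [|b q] // p_path q_path p_uniq q_uniq pq_last.
- by move: pq_last q_uniq => /= -> /andP[]; rewrite mem_last.
- by move: pq_last p_uniq => /= <- /andP[]; rewrite mem_last.
have /= ab := uniq_paths_head_eq p_path q_path p_uniq q_uniq isT isT pq_last.
subst b; move: p_path q_path p_uniq q_uniq pq_last => /=.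
move=> /andP[_ p_path] /andP[_ q_path] /andP[_ p_uniq] /andP[_ q_uniq] pq_last.
by rewrite (IH a q).
Qed.

Lemma walk_dist x y : walk_n e (d x y) x y.
Proof. by have [p [? ? _ <-]] := exists_shortest_path x y; apply/walk_nP; exists p. Qed.

Lemma distC x y : d x y = d y x.
Proof.
suff dist_le x' y' : d y' x' <= d x' y' by apply/eqP; rewrite eqn_leq !dist_le.
have [p [p_path p_last _ <-]] := exists_shortest_path x' y'.
apply: dist_le_walk; apply/walk_nP; exists (rev (belast x' p)).
rewrite size_rev size_belast -p_last rev_path path_converse; split => //.
by case: p {p_path p_last} => //= z p; rewrite rev_cons last_rcons.
Qed.

Lemma dist_triangle x y z : d x z <= d x y + d y z.
Proof.
apply: dist_le_walk; move: (walk_dist x y) (walk_dist y z).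
move=> /walk_nP[p [<- p_path p_last]] /walk_nP[q [<- q_path q_last]].
apply/walk_nP; exists (p ++ q).
by rewrite size_cat cat_path last_cat p_last p_path q_path q_last.
Qed.

Lemma dist_adj x y : e x y -> d x y = 1.
Proof.
move=> xy; apply/eqP; rewrite eqn_leq dist_gt0 andbC; apply/andP; split.
  by apply: contraTneq xy => ->; rewrite e_irr.
by apply: dist_le_walk; apply/walk_nP; exists [:: y]; rewrite /= xy.
Qed.

Lemma dist_adj_leS x y z : e x y -> d x z <= (d y z).+1.
Proof. by move=> xy; have := dist_triangle x y z; rewrite (dist_adj xy). Qed.

Lemma dist_last_lt a p x : path e a p -> x \in p -> d x (last a p) < size p.
Proof.
move=> p_path /splitPr x_in; case: x_in p_path => p1 p2.
rewrite cat_path last_cat /= => /and3P[_ _ p2_path].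
have : d x (last x p2) <= size p2 by apply: dist_le_walk; apply/walk_nP; exists p2.
by move/leq_ltn_trans; apply; rewrite size_cat /= addnS ltnS leq_addl.
Qed.

Lemma exists_closer_nbr x z : x != z -> exists2 y, e x y & (d y z).+1 = d x z.
Proof.
move=> xz; have [[|y p] [/= p_path p_last p_uniq p_size]] := exists_shortest_path x z.
  by rewrite p_last eqxx in xz.
case/andP: p_path => xy p_path; exists y => //.
apply/eqP; rewrite eqn_leq dist_adj_leS // andbT -p_size ltnS.
by apply: dist_le_walk; apply/walk_nP; exists p.
Qed.

Lemma nbr_geodesic_uniq x c z : e x c -> d c z <= d x z -> exists p : seq T,
  [/\ path e x (c :: p), last c p = z, uniq (x :: c :: p) & size p = d c z].
Proof.
move=> xc cz; have [p [p_path p_last p_uniq p_size]] := exists_shortest_path c z.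
exists p; split => //; first by rewrite /= xc.
rewrite cons_uniq p_uniq andbT inE negb_or; apply/andP; split.
  by apply: contraTneq xc => <-; rewrite e_irr.
by apply/negP => /(dist_last_lt p_path); rewrite p_last p_size ltnNge cz.
Qed.

Lemma closer_nbr_unique x a b z :
  e x a -> e x b -> d a z < d x z -> d b z < d x z -> a = b.
Proof.
move=> xa xb /ltnW az /ltnW bz.
have [p [p_path p_last p_uniq _]] := nbr_geodesic_uniq xa az.
have [q [q_path q_last q_uniq _]] := nbr_geodesic_uniq xb bz.
by case: (uniq_path_unique p_path q_path p_uniq q_uniq (etrans p_last (esym q_last))).
Qed.

Lemma dist_adj_neq x y z : e x y -> d x z != d y z.
Proof.
move=> xy; apply/eqP => xz_yz.
have [q [q_path q_last q_uniq q_size]] := nbr_geodesic_uniq xy (eq_leq (esym xz_yz)).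
have [p [p_path p_last p_uniq p_size]] := exists_shortest_path x z.
have := uniq_path_unique q_path p_path q_uniq p_uniq (etrans q_last (esym p_last)).
by move/(congr1 size); rewrite /= q_size p_size xz_yz => /eqP; rewrite gtn_eqF.
Qed.

Lemma dist_adj_cases x y z : e x y -> d y z = (d x z).+1 \/ (d y z).+1 = d x z.
Proof.
move=> xy; have yx : e y x by rewrite e_sym.
move: (dist_adj_leS z xy) (dist_adj_leS z yx) (dist_adj_neq z xy); lia.
Qed.

Lemma exists_parent r x : x != r -> exists2 p, e x p & (d r p).+1 = d r x.
Proof.
move=> xr; have [p xp pr] := exists_closer_nbr xr.
by exists p; rewrite // distC (distC r x).
Qed.

(* [x] lies in the component of [T - r] that contains the neighbour [u] of [r]. *)
Definition in_branch r u x := e r u && (d u x < d r x).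

Lemma in_branch_exists r x : x != r -> exists u, in_branch r u x.
Proof.
rewrite eq_sym => rx; have [u ru ux] := exists_closer_nbr rx.
by exists u; rewrite /in_branch ru -ux ltnSn.
Qed.

Lemma in_branch_unique r u u' x : in_branch r u x -> in_branch r u' x -> u = u'.
Proof. by move=> /andP[ru ux] /andP[ru' u'x]; apply: closer_nbr_unique ru ru' ux u'x. Qed.

Lemma in_branch_dist r u x : in_branch r u x -> (d u x).+1 = d r x.
Proof.
case/andP=> ru ux; case: (dist_adj_cases x ru) ux => // ->.
by rewrite ltnNge leqnSn.
Qed.

Lemma in_branch_depth1 r u x : in_branch r u x -> d r x = 1 -> x = u.
Proof.
by move=> ux; rewrite -(in_branch_dist ux) => -[] /eqP; rewrite dist_eq0 => /eqP.
Qed.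

Lemma notin_branch_dist r u x : e r u -> ~~ in_branch r u x -> d u x = (d r x).+1.
Proof.
move=> ru; rewrite /in_branch ru -leqNgt.
by case: (dist_adj_cases x ru) => // <-; rewrite ltnn.
Qed.

Lemma in_branch_neq r u x : in_branch r u x -> x != r.
Proof. by case/andP=> _; apply: contraTneq => ->; rewrite distxx. Qed.

Lemma in_branch_parent r u x p : in_branch r u x -> x != u -> e x p ->
  (d r p).+1 = d r x -> in_branch r u p.
Proof.
move=> ux xu xp px.
have pr : p != r.
  apply: contraNneq xu => p_eq_r; apply/eqP/(in_branch_depth1 ux).
  by rewrite -px p_eq_r distxx.
have [u' u'p] := in_branch_exists pr.
suff u'x : in_branch r u' x by rewrite (in_branch_unique ux u'x).
case/andP: (u'p) => ru' _; rewrite /in_branch ru' /=.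
apply: leq_ltn_trans (dist_triangle u' p x) _.
by rewrite e_sym in xp; rewrite (dist_adj xp) addn1 (in_branch_dist u'p) px.
Qed.

Lemma in_branch_dist_lt r u x z :
  in_branch r u x -> in_branch r u z -> d x z < d r x + d r z.
Proof.
move=> ux uz; move: (dist_triangle x u z) (in_branch_dist ux) (in_branch_dist uz).
rewrite (distC x u); lia.
Qed.

Lemma dist_across_branches r u x z :
  in_branch r u x -> ~~ in_branch r u z -> d x z = d r x + d r z.
Proof.
move=> ux uz; case/andP: (ux) => ru _.
suff claim n y : d r y = n -> (y == r) || in_branch r u y -> d y z = n + d r z.
  by apply: claim; rewrite ?ux ?orbT.
elim/ltn_ind: n y => n IH y y_depth y_in.
have [y_eq_r | yr] := eqVneq y r; first by rewrite -y_depth y_eq_r distxx.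
have {}y_in : in_branch r u y.
  by case/orP: y_in => // /eqP y_eq_r; rewrite y_eq_r eqxx in yr.
have [y_eq_u | yu] := eqVneq y u.
  by rewrite -y_depth y_eq_u (notin_branch_dist ru uz) (dist_adj ru).
have [p yp py] := exists_parent yr.
have p_in := in_branch_parent y_in yu yp py.
have [q pq qp] := exists_parent (in_branch_neq p_in).
have q_in : (q == r) || in_branch r u q.
  have [p_eq_u | pu] := eqVneq p u; last by rewrite (in_branch_parent p_in pu pq qp) orbT.
  by move: qp; rewrite p_eq_u (dist_adj ru) => -[] /eqP; rewrite dist_eq0 eq_sym => ->.
have p_claim : d p z = d r p + d r z.
  by apply: IH; rewrite ?p_in ?orbT // -y_depth -py.
have q_claim : d q z = d r q + d r z by apply: IH; rewrite // -y_depth -py -qp ltnW.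
rewrite e_sym in yp.
case: (dist_adj_cases z yp) => [-> | yz]; first by rewrite p_claim -y_depth -py.
(* Otherwise [y] and the grandparent [q] would both be neighbours of [p] closer to [z]. *)
have qz : d q z < d p z by rewrite q_claim p_claim -qp ltn_add2r.
have y_eq_q : y = q by apply: (closer_nbr_unique yp pq _ qz); rewrite -yz.
by move: py; rewrite y_eq_q -qp -addn2 -{2}[d r q]addn0 => /eqP; rewrite eqn_add2l.
Qed.

Lemma leaf_of_no_farther_nbr r z :
  z != r -> (forall y, e z y -> d r y < d r z) -> is_leaf e z.
Proof.
move=> zr z_far; have [p zp pz] := exists_parent zr.
rewrite /is_leaf /deg; apply/eqP.
suff -> : [set y | e z y] = [set p] by rewrite cards1.
apply/setP => y; rewrite !inE; apply/idP/eqP => [zy | ->] //.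
by apply: (closer_nbr_unique (z := r) zy zp); rewrite distC (distC z) ?z_far // -pz.
Qed.

Lemma major_of_three_nbrs w a b c :
  uniq [:: a; b; c] -> e w a -> e w b -> e w c -> is_major e w.
Proof.
move=> abc wa wb wc; rewrite /is_major /deg.
have <- : #|[:: a; b; c]| = 3 by apply/card_uniqP.
apply: subset_leq_card; apply/fintype.subsetP => y.
by rewrite !inE => /or3P[] /eqP ->.
Qed.

Definition on_geodesic r w z := d r w + d w z == d r z.

Lemma exists_leaf_beyond r w c : e w c -> d r c = (d r w).+1 ->
  exists l, [/\ is_leaf e l, l != w & on_geodesic r w l].
Proof.
move=> wc c_depth.
have c_beyond : on_geodesic r w c by rewrite /on_geodesic c_depth (dist_adj wc) addn1.
have [l l_beyond l_far] := @arg_maxnP T c (on_geodesic r w) (d r) c_beyond.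
have l_deep : d r w < d r l by rewrite -ltnS -c_depth ltnS; exact: l_far.
exists l; split => //; last by apply: contraTneq l_deep => ->; rewrite ltnn.
apply: leaf_of_no_farther_nbr.
  by rewrite -(dist_gt0 e) distC; apply: leq_ltn_trans l_deep.
move=> y ly; case: (dist_adj_cases r ly); rewrite !(distC _ r) => y_depth; last first.
  by rewrite -y_depth.
have y_beyond : on_geodesic r w y.
  rewrite /on_geodesic eqn_leq dist_triangle andbT y_depth -(eqP l_beyond).
  rewrite -addnS leq_add2l.
  by rewrite distC (distC w l); apply: dist_adj_leS; rewrite e_sym.
by have := l_far y y_beyond; rewrite /= y_depth ltnn.
Qed.

(* A leaf beyond [w], seen from [v], is a terminal vertex of [w]. *)
Lemma exterior_major_of_farthest v w : is_major e w -> w != v ->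
  (forall w', is_major e w' -> w' != v -> d v w' <= d v w) -> is_exterior_major e w.
Proof.
move=> w_major wv w_far.
have [p wp pw] := exists_parent wv.
have [c wc cp] : exists2 c, e w c & c != p.
  have : 0 < #|[set y | e w y] :\ p|.
    by move: w_major; rewrite /is_major /deg (cardsD1 p); case: (_ \in _) => /=; lia.
  by case/card_gt0P => c; rewrite !inE => /andP[cp wc]; exists c.
have c_depth : d v c = (d v w).+1.
  rewrite !(distC v); case: (dist_adj_cases v wc) => // cw.
  case/eqP: cp; apply: (closer_nbr_unique (z := v) wc wp); first by rewrite -cw.
  by rewrite (distC p) (distC w) -pw.
have [l [l_leaf lw l_beyond]] := exists_leaf_beyond wc c_depth.
rewrite /is_exterior_major w_major; apply/existsP; exists l.
rewrite /is_terminal l_leaf w_major.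
apply/forallP => w'; apply/implyP => /andP[w'_major w'w].
have [b b_l] := in_branch_exists lw.
have v_out : ~~ in_branch w b v.
  apply/negP => /(in_branch_dist_lt b_l).
  by rewrite (distC l) (distC w v) -(eqP l_beyond) addnC ltnn.
have w'_out : ~~ in_branch w b w'.
  apply/negP => w'_in; have w'v : w' != v by apply: contraNneq v_out => <-.
  move: (w_far w' w'_major w'v) (w'w).
  rewrite distC (dist_across_branches w'_in v_out) (distC w v) eq_sym -(dist_gt0 e).
  by rewrite -{2}[d v w]add0n leq_add2r leqn0 => /eqP ->.
rewrite (dist_across_branches b_l w'_out) distC.
by rewrite -{1}[d w l]addn0 ltn_add2l dist_gt0 eq_sym.
Qed.

Lemma major_eq_exterior v w :
  ex_num e = 1 -> is_exterior_major e v -> is_major e w -> w = v.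
Proof.
move=> ex1 v_ext w_major; apply/eqP; apply: contraT => wv.
have P_w : is_major e w && (w != v) by rewrite w_major.
have [w0 /andP[w0_major w0v] w0_far] :=
  @arg_maxnP T w (fun z => is_major e z && (z != v)) (d v) P_w.
have w0_ext : is_exterior_major e w0.
  apply: exterior_major_of_farthest w0_major w0v _ => w' w'_major w'v.
  by apply: w0_far; rewrite w'_major.
suff : 1 < ex_num e by rewrite ex1.
have <- : #|[set v; w0]| = 2 by rewrite cards2 eq_sym w0v.
apply: subset_leq_card.
by apply/fintype.subsetP => x; rewrite !inE => /orP[] /eqP ->.
Qed.

Lemma in_branch_at_depth r u x j : 0 < j -> in_branch r u x -> j <= d r x ->
  exists2 y, in_branch r u y & d r y = j.
Proof.
move=> j_gt0 ux /subnK; move: (d r x - j) => n; elim: n x ux => [|n IH] x ux x_depth.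
  by exists x.
have xu : x != u.
  apply: contra_eqN x_depth => /eqP ->; case/andP: ux => ru _.
  by rewrite (dist_adj ru) addSn eqSS -lt0n addn_gt0 j_gt0 orbT.
have [p xp px] := exists_parent (in_branch_neq ux).
by apply: (IH p (in_branch_parent ux xu xp px)); apply/eqP; rewrite -eqSS px -x_depth.
Qed.

Lemma Rset_nbrs_sub r u u' z : e r u -> e r u' ->
  z \in Rset e u u' -> in_branch r u z || in_branch r u' z.
Proof.
move=> ru ru'; rewrite inE; apply: contraTT; rewrite negb_or => /andP[uz u'z].
by rewrite (notin_branch_dist ru uz) (notin_branch_dist ru' u'z) eqxx.
Qed.

Lemma Rkset_sub_branch r u k x y z : in_branch r u x -> in_branch r u y ->
  d r x = k -> d r y = k.+1 -> z \in Rkset e k x y -> (z == r) || in_branch r u z.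
Proof.
move=> ux uy x_depth y_depth; rewrite inE.
apply: contraTT; rewrite negb_or => /andP[zr uz].
have z_gt0 : 0 < d r z by rewrite dist_gt0 eq_sym.
rewrite /distk (dist_across_branches ux uz) (dist_across_branches uy uz) x_depth y_depth.
have -> : minn (k + d r z) k.+1 = k.+1 by apply/minn_idPr; rewrite -addn1 leq_add2l.
have -> : minn (k.+1 + d r z) k.+1 = k.+1 by apply/minn_idPr; rewrite leq_addr.
by rewrite eqxx.
Qed.

Lemma exists_deepest_leaf r u : e r u ->
  exists2 l, is_leaf e l & forall x, d r x <= d r l.
Proof.
move=> ru; have [l _ l_far] := @arg_maxnP T r predT (d r) isT.
exists l => [|x]; last exact: l_far.
have lr : l != r.
  by apply: contraTneq (l_far u isT) => ->; rewrite distxx (dist_adj ru).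
apply: (leaf_of_no_farther_nbr lr) => y ly.
case: (dist_adj_cases r ly); rewrite !(distC _ r) => y_depth; last by rewrite -y_depth.
by have := l_far y isT; rewrite /= y_depth ltnn.
Qed.

Section Spider.
Variable v : T.
Hypothesis v_major : is_major e v.
Hypothesis major_eq : forall w, is_major e w -> w = v.

(* [branch_of v] is the junk value [v]. *)
Definition branch_of z := if [pick u | in_branch v u z] is Some u then u else v.

Lemma branch_ofP z : z != v -> in_branch v (branch_of z) z.
Proof.
move=> zv; rewrite /branch_of; case: pickP => [// | none].
by have [u uz] := in_branch_exists zv; rewrite none in uz.
Qed.

Lemma in_branch_branch_of u z : in_branch v u z -> branch_of z = u.
Proof. by move=> uz; apply: in_branch_unique (branch_ofP (in_branch_neq uz)) uz. Qed.

Lemma in_branch_same_depth u x y :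
  in_branch v u x -> in_branch v u y -> d v x = d v y -> x = y.
Proof.
suff claim n x' y' : in_branch v u x' -> in_branch v u y' ->
    d v x' = n.+1 -> d v y' = n.+1 -> x' = y'.
  by move=> ux uy xy; apply: (claim (d u x)); rewrite // -?xy (in_branch_dist ux).
clear x y; elim: n x' y' => [|n IH] x y ux uy x_depth y_depth.
  by rewrite (in_branch_depth1 ux x_depth) (in_branch_depth1 uy y_depth).
have not_u w : in_branch v u w -> d v w = n.+2 -> w != u.
  move=> uw; apply: contra_eqN => /eqP ->.
  by case/andP: uw => vu _; rewrite (dist_adj vu).
have [px xpx pxx] := exists_parent (in_branch_neq ux).
have [py ypy pyy] := exists_parent (in_branch_neq uy).
have upx := in_branch_parent ux (not_u x ux x_depth) xpx pxx.
have upy := in_branch_parent uy (not_u y uy y_depth) ypy pyy.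
have px_eq_py : px = py.
  by apply: IH => //; apply/eqP; rewrite -eqSS ?pxx ?pyy ?x_depth ?y_depth.
subst py; have [q pxq qpx] := exists_parent (in_branch_neq upx).
apply/eqP; apply: contraT => xy.
have q_depth : d v q = n by apply/eqP; rewrite -2!eqSS qpx pxx x_depth.
have off_q w : d v w = n.+2 -> w != q.
  move=> w_depth; apply: contra_eqN w_depth => /eqP ->.
  by rewrite q_depth ltn_eqF // ltnW.
have xyq : uniq [:: x; y; q] by rewrite /= !inE negb_or xy !off_q.
rewrite e_sym in xpx; rewrite e_sym in ypy.
have px_major := major_of_three_nbrs xyq xpx ypy pxq.
by have := in_branch_neq upx; rewrite (major_eq px_major) eqxx.
Qed.

Lemma exists_two_nbrs_but a :
  exists u1 u2, [/\ u1 != u2, e v u1, e v u2, u1 != a & u2 != a].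
Proof.
have N_gt1 : 1 < #|[set u | e v u] :\ a|.
  by move: v_major; rewrite /is_major /deg (cardsD1 a); case: (_ \in _) => /=; lia.
have [u1 u1N] : exists u1, u1 \in [set u | e v u] :\ a.
  by apply/card_gt0P; apply: ltn_trans N_gt1.
move: N_gt1; rewrite (cardsD1 u1) u1N add1n ltnS => /card_gt0P[u2 u2N].
move: u1N u2N; rewrite !inE => /andP[u1a vu1] /andP[u21 /andP[u2a vu2]].
by exists u1, u2; rewrite eq_sym u21.
Qed.

Lemma nbr_resolves u x y :
  e v u -> ~~ in_branch v u y -> d u x <= d v y -> u \in Rset e x y.
Proof.
by move=> vu uy ux; rewrite inE (distC x) (distC y) (notin_branch_dist vu uy) ltn_eqF.
Qed.

Lemma exists_two_resolving_nbrs x y : x != y -> exists u1 u2,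
  [/\ u1 != u2, e v u1, e v u2, u1 \in Rset e x y & u2 \in Rset e x y].
Proof.
wlog xy_le : x y / d v x <= d v y.
  move=> W xy; case: (leqP (d v x) (d v y)) => [le | /ltnW le]; first exact: W.
  by rewrite RsetC; apply: W; rewrite // eq_sym.
move=> xy; case: ltngtP xy_le => // [xy_lt | xy_eq] _.
  have [u1 [u2 [u12 vu1 vu2 u1y u2y]]] := exists_two_nbrs_but (branch_of y).
  have off u : e v u -> u != branch_of y -> u \in Rset e x y.
    move=> vu uy; apply: nbr_resolves => //.
      by apply: contra uy => /in_branch_branch_of ->.
    by rewrite e_sym in vu; apply: leq_trans (dist_adj_leS x vu) xy_lt.
  by exists u1, u2; rewrite u12 vu1 vu2 !off.
(* At equal depths [x] and [y] lie in distinct branches, whose roots resolve them. *)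
have xv : x != v.
  apply: contraNneq xy => x_eq_v.
  by move: xy_eq; rewrite x_eq_v distxx => /esym/eqP; rewrite dist_eq0.
have yv : y != v.
  apply: contraNneq xy => y_eq_v.
  by move: xy_eq; rewrite y_eq_v distxx => /eqP; rewrite dist_eq0 eq_sym.
have bxy : branch_of x != branch_of y.
  apply: contra_neq xy => bx_eq_by; apply: in_branch_same_depth xy_eq.
    exact: branch_ofP.
  by rewrite bx_eq_by; apply: branch_ofP.
have own z w : z != v -> branch_of z != branch_of w -> d v z <= d v w ->
    branch_of z \in Rset e z w.
  move=> zv zw zw_le; have uz := branch_ofP zv.
  apply: nbr_resolves; first by case/andP: uz.
    by apply: contra zw => /in_branch_branch_of ->.
  by apply: leq_trans zw_le; rewrite -(in_branch_dist uz).
have [vbx vby] : e v (branch_of x) /\ e v (branch_of y).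
  by split; [case/andP: (branch_ofP xv) | case/andP: (branch_ofP yv)].
exists (branch_of x), (branch_of y); split => //; first exact: own xv bxy (eq_leq xy_eq).
by rewrite RsetC; apply: own yv _ (eq_leq (esym xy_eq)); rewrite eq_sym.
Qed.

Lemma leaf_terminal l : is_leaf e l -> is_terminal e l v.
Proof.
move=> l_leaf; rewrite /is_terminal l_leaf v_major /=.
by apply/forallP => w; apply/implyP => /andP[/major_eq -> /eqP].
Qed.

Variable R : realType.
Local Open Scope ring_scope.

Definition branch_sum (g : T -> R) u := \sum_(z | in_branch v u z) g z.

Lemma sum_over_branches (g : T -> R) :
  \sum_z g z = g v + \sum_(u in [set u | e v u]) branch_sum g u.
Proof.
rewrite (bigD1 v) //=; congr (_ + _).
rewrite (partition_big branch_of (mem [set u | e v u])) /=; last first.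
  by move=> z zv; rewrite inE; case/andP: (branch_ofP zv).
apply: eq_bigr => u _; apply: eq_bigl => z.
apply/idP/idP => [/andP[zv /eqP <-] | uz]; first exact: branch_ofP.
by rewrite (in_branch_neq uz) (in_branch_branch_of uz) eqxx.
Qed.

Lemma branch_sums_ge (g : T -> R) (S : {set T}) : resolving_fun e g ->
  (forall u, u \in S -> e v u) -> (2 <= #|S|)%N ->
  #|S|%:R / 2 <= \sum_(u in S) branch_sum g u.
Proof.
move=> [g01 g_res] SN S_ge2; apply: sum_ge_half_card S_ge2 => u u' uS u'S uu'.
have g_ge0 z : 0 <= g z by case/andP: (g01 z).
apply: le_trans (g_res _ _ uu') _; apply: le_trans (ler_sum_orb _ _ g_ge0).
by apply: ler_sum_sub => // z; apply: Rset_nbrs_sub; apply: SN.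
Qed.

Lemma resolving_sum_ge (g : T -> R) :
  resolving_fun e g -> (deg e v)%:R / 2 <= \sum_z g z.
Proof.
move=> g_res; rewrite sum_over_branches -[X in X <= _]add0r.
apply: lerD; first by case: g_res => /(_ v) /andP[].
by apply: branch_sums_ge => // [u|]; rewrite ?inE //; apply: ltnW.
Qed.

Lemma k_resolving_sum_gt k x (g : T -> R) : (0 < k)%N -> k_resolving_fun e k g ->
  (k < d v x)%N -> ((deg e v)%:R + 1) / 2 <= \sum_z g z.
Proof.
move=> k_gt0 g_kres kx; have g_res := k_resolving_resolving g_kres.
have g_ge0 z : 0 <= g z by case: g_res => /(_ z) /andP[].
have xv : x != v by rewrite -(dist_gt0 e) distC (leq_ltn_trans _ kx).
set b := branch_of x; have bx : in_branch v b x := branch_ofP xv.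
have vb : e v b by case/andP: bx.
have [y1 by1 y1_depth] := in_branch_at_depth k_gt0 bx (ltnW kx).
have [y2 by2 y2_depth] := in_branch_at_depth (ltn0Sn k) bx kx.
have y12 : y1 != y2 by apply: contra_eqN y2_depth => /eqP <-; rewrite y1_depth ltn_eqF.
have v_or_b : 1 <= g v + branch_sum g b.
  apply: le_trans (g_kres.2 _ _ y12) _.
  apply: le_trans (ler_sum_sub (Q := fun z => (z == v) || in_branch v b z) g_ge0 _) _.
    by move=> z; apply: Rkset_sub_branch by1 by2 y1_depth y2_depth.
  by apply: le_trans (ler_sum_orb _ _ g_ge0) _; rewrite big_pred1_eq.
have deg_b : deg e v = #|[set u | e v u] :\ b|.+1 by rewrite /deg (cardsD1 b) inE vb.
have others : #|[set u | e v u] :\ b|%:R / 2 <=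
    \sum_(u in [set u | e v u] :\ b) branch_sum g u.
  apply: branch_sums_ge => // [u|]; first by rewrite in_setD1 inE => /andP[].
  by move: v_major; rewrite /is_major deg_b ltnS.
rewrite sum_over_branches (bigD1 b) ?inE //=.
have -> : \sum_(u in [set u | e v u] | u != b) branch_sum g u =
          \sum_(u in [set u | e v u] :\ b) branch_sum g u.
  by apply: eq_bigl => u; rewrite in_setD1 andbC.
have -> : (deg e v)%:R = #|[set u | e v u] :\ b|%:R + 1 :> R by rewrite deg_b natr1.
by move: v_or_b others; lra.
Qed.

Definition half_on_nbrs (z : T) : R := if e v z then 2^-1 else 0.

Lemma half_on_nbrs01 z : 0 <= half_on_nbrs z <= 1.
Proof. by rewrite /half_on_nbrs; case: ifP => _; apply/andP; split; lra. Qed.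

Lemma sum_half_on_nbrs : \sum_z half_on_nbrs z = (deg e v)%:R / 2.
Proof.
rewrite /half_on_nbrs -big_mkcond /=.
have -> : \sum_(z | e v z) (2^-1 : R) = \sum_(z in [set u | e v u]) 2^-1.
  by apply: eq_bigl => u; rewrite inE.
by rewrite sumr_const mulrC mulr_natr.
Qed.

Lemma half_on_nbrs_ge1 (A : {set T}) u1 u2 : u1 != u2 -> e v u1 -> e v u2 ->
  u1 \in A -> u2 \in A -> 1 <= \sum_(z in A) half_on_nbrs z.
Proof.
move=> u12 vu1 vu2 u1A u2A.
rewrite (bigD1 u1) //= (bigD1 u2) /=; last by rewrite u2A eq_sym.
have half u : e v u -> half_on_nbrs u = 2^-1 by rewrite /half_on_nbrs => ->.
rewrite addrA !half // -[X in X <= _]addr0; apply: lerD; first lra.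
by apply: sumr_ge0 => z _; case/andP: (half_on_nbrs01 z).
Qed.

Lemma half_on_nbrs_resolving : resolving_fun e half_on_nbrs.
Proof.
split=> [|x y xy]; first exact: half_on_nbrs01.
have [u1 [u2 [u12 vu1 vu2 u1xy u2xy]]] := exists_two_resolving_nbrs xy.
exact: half_on_nbrs_ge1 u12 vu1 vu2 u1xy u2xy.
Qed.

Lemma half_on_nbrs_k_resolving k :
  (forall x, (d v x <= k)%N) -> k_resolving_fun e k half_on_nbrs.
Proof.
move=> shallow; split=> [|x y xy]; first exact: half_on_nbrs01.
have [u1 [u2 [u12 vu1 vu2 u1xy u2xy]]] := exists_two_resolving_nbrs xy.
have near u z : e v u -> (d z u <= k.+1)%N.
  by rewrite e_sym distC => uv; apply: leq_trans (dist_adj_leS z uv) _; rewrite ltnS.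
by apply: (half_on_nbrs_ge1 u12 vu1 vu2); rewrite Rkset_Rset //; apply: near.
Qed.

Lemma dimf_spider : dimf e R = (deg e v)%:R / 2.
Proof.
apply: inf_eq_least => [|_ [g [g_res ->]]]; last exact: resolving_sum_ge.
exists half_on_nbrs; rewrite sum_half_on_nbrs.
by split => //; apply: half_on_nbrs_resolving.
Qed.

Lemma dimkf_spider_shallow k :
  (forall x, (d v x <= k)%N) -> dimkf e R k = (deg e v)%:R / 2.
Proof.
move=> shallow; apply: inf_eq_least => [|_ [g [g_kres ->]]].
  exists half_on_nbrs; rewrite sum_half_on_nbrs.
  by split => //; apply: half_on_nbrs_k_resolving.
exact: resolving_sum_ge (k_resolving_resolving g_kres).
Qed.

Lemma dimkf_spider_deep k x :
  (0 < k)%N -> (k < d v x)%N -> ((deg e v)%:R + 1) / 2 <= dimkf e R k.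
Proof.
move=> k_gt0 kx; apply: lb_le_inf => [|_ [g [g_kres ->]]].
  by exists (\sum_(s : T) 1); exists (fun=> 1); split => //; apply: const1_k_resolving.
exact: k_resolving_sum_gt kx.
Qed.

Lemma spider_dimkf_eq_dimf k : (0 < k)%N ->
  dimkf e R k = dimf e R <-> (forall l, is_terminal e l v -> (d v l <= k)%N).
Proof.
move=> k_gt0; rewrite dimf_spider; split=> [dimk_eq l l_term | shallow].
  rewrite leqNgt; apply/negP => deep.
  by have := dimkf_spider_deep k_gt0 deep; rewrite dimk_eq; lra.
apply: dimkf_spider_shallow => x.
have [u] : exists u, u \in [set y | e v y] by apply/card_gt0P; apply: leq_trans v_major.
rewrite inE => vu; have [l l_leaf l_deepest] := exists_deepest_leaf vu.
exact: leq_trans (l_deepest x) (shallow l (leaf_terminal l_leaf)).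
Qed.

End Spider.
End Trees.

Theorem proposition3p18 (R : realType) (T : finType) (e : rel T) (k : nat) (v : T) :
  0 < k -> is_tree e -> ex_num e = 1 -> is_exterior_major e v ->
  (dimkf e R k = dimf e R <->
   (forall l : T, is_terminal e l v -> dist e v l <= k)).
Proof.
move=> k_gt0 [[e_sym e_irr] e_conn e_acyc] ex1 v_ext.
have v_major : is_major e v by case/andP: v_ext.
have major_eq w : is_major e w -> w = v by apply: major_eq_exterior.
exact: spider_dimkf_eq_dimf.
Qed.
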